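(* Let $G$ be an odd unicyclic graph on $n$ vertices $1,2,\ldots,n$ with cycle $C$, let $Q$ be its signless Laplacian and $Q^{-1}=[q^+_{i,j}]$ its inverse. Then a vertex $i$ is in $C$ if and only if $q^+_{i,i}=\frac{|C|}{4}$.
   Context: A unicyclic graph on $n$ vertices is a simple connected graph with $n$ edges; it is odd if its unique cycle $C$ has odd length. The signless Laplacian is $Q=D+A$ ($A$ adjacency matrix, $D$ diagonal degree matrix); it is invertible for such graphs. $|C|$ is the number of vertices of $C$. *)

From mathcomp Require Import all_boot all_order all_algebra.
Set Implicit Arguments. Unset Strict Implicit. Unset Printing Implicit Defensive.
Import Order.TTheory GRing.Theory Num.Theory.

(* A simple graph on the vertex set 'I_n (vertices 0..n-1 stand for 1..n),
   given by an adjacency relation e. *)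
Definition simple_graph (n : nat) (e : rel 'I_n) : Prop :=
  symmetric e /\ irreflexive e.

Definition num_edges (n : nat) (e : rel 'I_n) : nat :=
  #|[set p : 'I_n * 'I_n | e p.1 p.2 && (p.1 < p.2)%N]|.

Definition connected_graph (n : nat) (e : rel 'I_n) : Prop :=
  forall i j : 'I_n, connect e i j.

Definition unicyclic (n : nat) (e : rel 'I_n) : Prop :=
  [/\ simple_graph e, connected_graph e & num_edges e = n].

Definition graph_cycle (n : nat) (e : rel 'I_n) (C : seq 'I_n) : bool :=
  [&& uniq C, (3 <= size C)%N & cycle e C].

Definition degree (n : nat) (e : rel 'I_n) (i : 'I_n) : nat :=
  #|[set j | e i j]|.

Local Open Scope ring_scope.
Definition signless_laplacian (R : nzRingType) (n : nat) (e : rel 'I_n)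
  : 'M[R]_n :=
  \matrix_(i, j) ((if i == j then (degree e i)%:R else 0) + (e i j)%:R).

(* Write Q = B B^T with B the vertex-edge incidence matrix, which is square
   since a unicyclic graph has as many edges as vertices. If y B = 0, then
   y_a + y_b = 0 on every edge, so y alternates in sign around C and, C being
   odd, vanishes on C and then everywhere by connectivity: B is invertible and
   q^+_ii = |f|^2 for the unique f with B f = e_i. This f is explicit: weights
   +1, -1, ... along a path of d edges from i meeting C only at its end c,
   followed by weights +-1/2 alternating around C from c, whose odd length
   makes the two contributions at c add up instead of cancelling. Thus
   q^+_ii = d + |C|/4, and d = 0 exactly when i lies on C. *)

From mathcomp Require Import all_boot all_order all_algebra.
From mathcomp Require Import ring.
Import Order.TTheory GRing.Theory Num.Theory.
Set Implicit Arguments. Unset Strict Implicit. Unset Printing Implicit Defensive.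
Local Open Scope ring_scope.

Lemma invmx_gram_diag (F : fieldType) n m (B : 'M[F]_(n, m)) (f : 'cV_m) i :
  row_free B -> row_free B^T -> B *m f = delta_mx i 0 ->
  invmx (B *m B^T) i i = (f^T *m f) 0 0.
Proof.
move=> rfB rfBt Bf; set Q := B *m B^T.
have Qu : Q \in unitmx by rewrite -row_free_unit /row_free mxrankMfree.
have fE : f = B^T *m (invmx Q *m delta_mx i 0).
  apply: trmx_inj; apply: (row_free_inj rfBt).
  by rewrite /= -!trmx_mul Bf mulmxA -/Q mulmxA mulmxV // mul1mx.
by rewrite {2}fE mulmxA -trmx_mul Bf trmx_delta -colE -rowE !mxE.
Qed.

Lemma path_first_hit (T : eqType) (e : rel T) (A : pred T) x p :
  path e x p -> A (last x p) ->
  exists2 P, prefix P p & [/\ path e x P, A (last x P) & all (predC A) (belast x P)].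
Proof.
elim: p x => [|y p IHp] x; first by move=> _ Ax; exists [::].
have [Ax _ _ | nAx /= /andP[exy yp] Alast] := boolP (A x).
  by exists [::]; rewrite ?prefix0s.
have [P pP [yP AP AbP]] := IHp y yp Alast.
by exists (y :: P); rewrite /= ?prefix_cons ?eqxx ?exy ?nAx.
Qed.

Section Walks.

Variable n : nat.
Implicit Types (a b x y : 'I_n) (s t : seq 'I_n).

Definition edge_key a b : 'I_n * 'I_n := if (a < b)%N then (a, b) else (b, a).

Lemma edge_keyC a b : edge_key a b = edge_key b a.
Proof. by rewrite /edge_key; case: ltngtP => // /val_inj ->. Qed.

Lemma edge_key_inj a : injective (edge_key a).
Proof.
by move=> b c; rewrite /edge_key; do 2!case: ifP => _; case=> *; congruence.
Qed.

Lemma edge_key_sym (T : Type) (h : 'I_n -> 'I_n -> T) a b :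
  (forall u v, h u v = h v u) -> h (edge_key a b).1 (edge_key a b).2 = h a b.
Proof. by move=> hC; rewrite /edge_key; case: ifP. Qed.

Definition walk_edges x s := pairmap edge_key x s.

Lemma walk_edges_ends (A : pred 'I_n) x s :
  all A (x :: s) -> all (fun p => A p.1 && A p.2) (walk_edges x s).
Proof.
elim: s x => [//|y s IHs] x /= /and3P[Ax Ay As].
rewrite (edge_key_sym (h := fun u v => A u && A v)) => [|u v]; last exact: andbC.
by rewrite Ax Ay IHs //= Ay.
Qed.

Lemma walk_edges_belast (A : pred 'I_n) x s :
  all A (belast x s) -> all (fun p => A p.1 || A p.2) (walk_edges x s).
Proof.
elim: s x => [//|y s IHs] x /= /andP[Ax As].
rewrite (edge_key_sym (h := fun u v => A u || A v)) => [|u v]; last exact: orbC.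
by rewrite Ax IHs.
Qed.

Lemma edge_key_notin_walk_edges a b y s :
  a \notin y :: s -> edge_key a b \notin walk_edges y s.
Proof.
apply: contra => /(allP (walk_edges_ends (allss (y :: s)))).
rewrite (edge_key_sym (h := fun u v => (u \in y :: s) && (v \in y :: s))).
  by case/andP.
by move=> u v; exact: andbC.
Qed.

Lemma uniq_walk_edges x s : uniq (x :: s) -> uniq (walk_edges x s).
Proof.
elim: s x => [//|y s IHs] x /andP[xys ys] /=.
by rewrite edge_key_notin_walk_edges // IHs.
Qed.

Lemma uniq_cycle_edges x s :
  uniq (x :: s) -> (1 < size s)%N -> uniq (walk_edges x (rcons s x)).
Proof.
case: s => [//|y s] uxs s_gt1.
have /andP[xys uys] := uxs; have /andP[ys _] := uys.
have ly : last y s != y.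
  move: s_gt1 ys; case: (s) => // z t _.
  by apply: contraNneq => <-; exact: (mem_last z t).
rewrite /walk_edges -cats1 pairmap_cat cats1 rcons_uniq.
rewrite [uniq _](uniq_walk_edges uxs) andbT /= inE negb_or edge_keyC.
by rewrite edge_key_notin_walk_edges // (inj_eq (@edge_key_inj _)) andbT.
Qed.

Lemma walk_edges_disjoint (A : pred 'I_n) x s y t :
  all (predC A) (belast x s) -> all A (y :: t) ->
  ~~ has (mem (walk_edges y t)) (walk_edges x s).
Proof.
move=> /walk_edges_belast/allP xsA /walk_edges_ends/allP ytA.
by apply/hasPn => p /xsA /=; apply: contraL => /ytA /andP[-> ->].
Qed.

End Walks.

Section EdgeSpace.

Variables (R : comNzRingType) (n : nat) (e : rel 'I_n).
Hypotheses (e_sym : symmetric e) (e_irr : irreflexive e).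

Definition edge_set : {set 'I_n * 'I_n} := [set p | e p.1 p.2 && (p.1 < p.2)%N].

Local Notation m := #|edge_set|.

Definition incidence : 'M[R]_(n, m) :=
  \matrix_(v, t) (((enum_val t).1 == v)%:R + ((enum_val t).2 == v)%:R).

Definition edge_col (p : 'I_n * 'I_n) : 'cV[R]_m := \col_t (enum_val t == p)%:R.

Fixpoint alt_edge_sum (ps : seq ('I_n * 'I_n)) : 'cV[R]_m :=
  if ps is p :: ps' then edge_col p - alt_edge_sum ps' else 0.

Lemma edge_key_in a b : e a b -> edge_key a b \in edge_set.
Proof.
move=> eab; have : a != b by apply: contraTneq eab => ->; rewrite e_irr.
rewrite inE /edge_key -val_eqE.
by case: ltngtP => //= ab _; rewrite ab andbT // e_sym.
Qed.

Lemma walk_edges_sub x s : path e x s -> {subset walk_edges x s <= edge_set}.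
Proof.
elim: s x => [//|y s IHs] x /= /andP[exy ys] p.
by rewrite inE => /predU1P[-> | /IHs]; [exact: edge_key_in | apply].
Qed.

Lemma sum_edge_set (G : 'I_n -> 'I_n -> R) :
  \sum_(p in edge_set) (G p.1 p.2 + G p.2 p.1) = \sum_a \sum_(b | e a b) G a b.
Proof.
rewrite big_split pair_big_dep [RHS](bigID (fun p : 'I_n * 'I_n => (p.1 < p.2)%N)) /=.
congr (_ + _); first by apply: eq_bigl => p; rewrite inE.
rewrite (reindex_inj (can_inj swap_pairK)); apply: eq_bigl => -[a b] /=.
rewrite inE /= [e b a]e_sym; case eab: (e a b) => //=.
have : a != b by apply: contraTneq eab => ->; rewrite e_irr.
by rewrite -val_eqE /=; case: ltngtP.
Qed.

Lemma signless_laplacianE : signless_laplacian R e = incidence *m incidence^T.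
Proof.
apply/matrixP => u v; rewrite !mxE.
pose G a b : R := (a == u)%:R * ((a == v)%:R + (b == v)%:R).
transitivity (\sum_(p in edge_set) (G p.1 p.2 + G p.2 p.1)); last first.
  by rewrite big_enum_val; apply: eq_bigr => t _; rewrite !mxE /G; ring.
rewrite sum_edge_set (bigD1 u) //= [X in _ = _ + X]big1 ?addr0; last first.
  by move=> a /negbTE au; apply: big1 => b _; rewrite /G au mul0r.
under eq_bigr do rewrite /G eqxx /= mulr1n mul1r.
rewrite big_split /=; congr (_ + _).
  rewrite sumr_const /degree cardsE; case: eqP => _; last by rewrite mul0rn.
  by rewrite /= mulr1n.
have [euv | neuv] := boolP (e u v).
  by rewrite (bigD1 v) //= eqxx big1 ?addr0 // => b /andP[_ /negbTE ->].
by rewrite big1 // => b eub; case: eqP eub => // ->; rewrite (negbTE neuv).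
Qed.

Lemma incidence_edge_col a b :
  e a b -> incidence *m edge_col (edge_key a b) = delta_mx a 0 + delta_mx b 0.
Proof.
move=> eab; apply/matrixP => v j; rewrite ord1 !mxE.
transitivity (\sum_(p in edge_set)
    ((p.1 == v)%:R + (p.2 == v)%:R) * (p == edge_key a b)%:R : R).
  by rewrite [RHS]big_enum_val; apply: eq_bigr => t _; rewrite !mxE.
rewrite (bigD1 _ (edge_key_in eab)) /= eqxx mulr1 big1 ?addr0; last first.
  by move=> p /andP[_ /negbTE ->]; rewrite mulr0.
rewrite (edge_key_sym (h := fun u w => (u == v)%:R + (w == v)%:R : R)).
  by rewrite eqxx !andbT ![v == _]eq_sym.
by move=> u w; exact: addrC.
Qed.

Lemma incidence_alt_walk x s :
  path e x s -> incidence *m alt_edge_sum (walk_edges x s) =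
                delta_mx x 0 - (-1) ^+ size s *: delta_mx (last x s) 0.
Proof.
elim: s x => [|y s IHs] x /=; first by rewrite mulmx0 expr0 scale1r subrr.
case/andP=> exy ys; rewrite mulmxBr incidence_edge_col // IHs //.
by rewrite exprS mulN1r scaleNr opprK opprB addrACA subrr addr0.
Qed.

Lemma tr_edge_col_mul p q :
  (edge_col p)^T *m edge_col q = ((p == q) && (p \in edge_set))%:R%:M.
Proof.
apply/matrixP => i j; rewrite !ord1 !mxE eqxx mulr1n.
transitivity (\sum_(r in edge_set) (r == p)%:R * (r == q)%:R : R).
  by rewrite [RHS]big_enum_val; apply: eq_bigr => t _; rewrite !mxE.
have [pE | pNE] := boolP (p \in edge_set); last first.
  rewrite andbF big1 // => r rE; have /negbTE -> : r != p.
    by apply: contraNneq pNE => <-.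
  by rewrite mul0r.
rewrite andbT (bigD1 p) //= eqxx mul1r big1 ?addr0 // => r /andP[_ /negbTE ->].
by rewrite mul0r.
Qed.

Lemma tr_edge_col_mul_alt p qs :
  p \notin qs -> (edge_col p)^T *m alt_edge_sum qs = 0.
Proof.
elim: qs => [|q qs IHqs]; first by rewrite mulmx0.
rewrite inE negb_or => /andP[pq pqs] /=.
by rewrite mulmxBr IHqs // tr_edge_col_mul (negbTE pq) subr0 raddf0.
Qed.

Lemma tr_alt_edge_sum_mul_disjoint ps qs :
  ~~ has (mem qs) ps -> (alt_edge_sum ps)^T *m alt_edge_sum qs = 0.
Proof.
elim: ps => [|p ps IHps]; first by rewrite trmx0 mul0mx.
rewrite /= negb_or => /andP[pqs psqs].
by rewrite linearB /= mulmxBl tr_edge_col_mul_alt // IHps // subr0.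
Qed.

Lemma tr_alt_edge_sum_mul ps :
  uniq ps -> {subset ps <= edge_set} ->
  (alt_edge_sum ps)^T *m alt_edge_sum ps = (size ps)%:R%:M.
Proof.
elim: ps => [|p ps IHps] /=; first by rewrite trmx0 mul0mx raddf0.
move=> /andP[pps ups] psE.
have altp : (alt_edge_sum ps)^T *m edge_col p = 0.
  by rewrite -[edge_col p]trmxK -trmx_mul tr_edge_col_mul_alt ?trmx0.
rewrite !mulmxBr linearB /= !mulmxBl tr_edge_col_mul_alt // altp.
rewrite tr_edge_col_mul eqxx psE ?mem_head // IHps // => [|q qps]; last first.
  by apply: psE; rewrite inE qps orbT.
by rewrite subr0 sub0r opprK -nat1r raddfD.
Qed.

End EdgeSpace.

Lemma path_last_alternating (T : Type) (R : pzRingType) (e : rel T) (y : T -> R) x s :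
  (forall a b, e a b -> y a + y b = 0) ->
  path e x s -> y (last x s) = (-1) ^+ size s * y x.
Proof.
move=> hy; elim: s x => [|z s IHs] x /=; first by rewrite mul1r.
case/andP=> exz zs; have yz : y z = - y x.
  by apply/eqP; rewrite -addr_eq0 addrC hy.
by rewrite IHs // yz mulrN exprS mulN1r mulNr.
Qed.

Lemma odd_cycle_antisym_eq0 (R : numDomainType) n (e : rel 'I_n) (C : seq 'I_n)
    (y : 'I_n -> R) :
  connected_graph e -> cycle e C -> odd (size C) ->
  (forall a b, e a b -> y a + y b = 0) -> forall v, y v = 0.
Proof.
move=> conn + + hy v; case: C => [//|c cs] cyc odd_cs.
have yc : y c = 0.
  have := path_last_alternating hy (cyc : path e c (rcons cs c)).
  rewrite last_rcons size_rcons -signr_odd odd_cs expr1 mulN1r => ycN.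
  have : y c *+ 2 == 0 by rewrite mulr2n {1}ycN addNr.
  by rewrite mulrn_eq0 => /eqP.
have closed_eq0 : closed e [pred w | y w == 0].
  move=> a b eab; rewrite !inE; have := hy a b eab.
  by rewrite addrC => /(canRL (addrK _)); rewrite add0r => ->; rewrite oppr_eq0.
by have := closed_connect closed_eq0 (conn c v); rewrite !inE yc eqxx => /esym/eqP.
Qed.

Section OddUnicyclic.

Variables (R : numFieldType) (n : nat) (e : rel 'I_n).
Hypotheses (e_sym : symmetric e) (e_irr : irreflexive e).

Local Notation B := (incidence R e).

Lemma row_free_incidence C :
  connected_graph e -> cycle e C -> odd (size C) -> row_free B.
Proof.
move=> conn cycC oddC; rewrite -kermx_eq0; apply/eqP/row_matrixP => r.
have : row r (kermx B) *m B = 0 by apply/sub_kermxP; exact: row_sub.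
move: (row r _) => y yB; rewrite row0; apply/rowP => v; rewrite mxE.
apply: (odd_cycle_antisym_eq0 (y := fun w => y 0 w) conn cycC oddC) => a b eab.
have := congr1 (fun M => (M *m edge_col R e (edge_key a b)) 0 0) yB.
by rewrite -mulmxA incidence_edge_col // mul0mx mulmxDr -!colE !mxE.
Qed.

Lemma incidence_delta_preimage i P c cs :
  path e i P -> uniq (i :: P) -> last i P = c ->
  all (predC (mem (c :: cs))) (belast i P) ->
  graph_cycle e (c :: cs) -> odd (size (c :: cs)) ->
  exists2 f : 'cV_#|edge_set e|, B *m f = delta_mx i 0 &
    f^T *m f = ((size P)%:R + (size (c :: cs))%:R / 4%:R)%:M.
Proof.
move=> eP uP lastP belP /and3P[uC sC cycC] oddC.
have eC : path e c (rcons cs c) := cycC.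
set fP := alt_edge_sum R e (walk_edges i P).
set fC := alt_edge_sum R e (walk_edges c (rcons cs c)).
set t : R := (-1) ^+ size P / 2%:R.
have two_neq0 : 2%:R != 0 :> R by rewrite pnatr_eq0.
have disj : ~~ has (mem (walk_edges c (rcons cs c))) (walk_edges i P).
  apply: (walk_edges_disjoint belP); rewrite -rcons_cons all_rcons.
  by apply/andP; split; [exact: mem_head | exact: allss].
exists (fP + t *: fC).
  rewrite mulmxDr -scalemxAr !incidence_alt_walk // lastP last_rcons size_rcons.
  rewrite -[(-1) ^+ _.+1]signr_odd (oddC : odd (size cs).+1) expr1 scaleN1r opprK.
  have tt : t + t = (-1) ^+ size P by rewrite /t; field.
  by rewrite scalerDr -scalerDl tt subrK.
rewrite !mulmxDr linearD /= !mulmxDl linearZ /= -!scalemxAl -!scalemxAr.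
have disj' : ~~ has (mem (walk_edges i P)) (walk_edges c (rcons cs c)).
  by rewrite has_sym.
rewrite (tr_alt_edge_sum_mul_disjoint _ _ disj).
rewrite (tr_alt_edge_sum_mul_disjoint _ _ disj').
rewrite !scaler0 !addr0 add0r.
rewrite !tr_alt_edge_sum_mul ?uniq_cycle_edges ?uniq_walk_edges //;
  try exact: walk_edges_sub.
rewrite scalerA scale_scalar_mx [RHS]raddfD /walk_edges !size_pairmap size_rcons.
congr (_ + _%:M).
have ss : (-1) ^+ size P * (-1) ^+ size P = 1 :> R by rewrite -expr2 sqrr_sign.
by rewrite /t (mulrACA ((-1) ^+ size P)) ss mul1r; field.
Qed.

End OddUnicyclic.

Lemma exists_walk_to_cycle n (e : rel 'I_n) (C : seq 'I_n) c i :
  connected_graph e -> c \in C ->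
  exists P, [/\ path e i P, uniq (i :: P), last i P \in C &
              all (predC (mem C)) (belast i P)].
Proof.
move=> conn cC; have /connectP[p ep cE] := conn i c; move: cC; rewrite cE.
case/shortenP: ep => p' ep' up' _ cC.
have [P pP [eP CP CbP]] := path_first_hit (A := mem C) ep' cC.
by exists P; split=> //; apply: prefix_uniq up'; rewrite prefix_cons eqxx.
Qed.

Lemma graph_cycle_rot_at n (e : rel 'I_n) (C : seq 'I_n) c :
  graph_cycle e C -> c \in C ->
  exists cs, [/\ graph_cycle e (c :: cs), c :: cs =i C & size (c :: cs) = size C].
Proof.
move=> gC cC; exists (drop (index c C).+1 C ++ take (index c C) C).
rewrite -rot_index // /graph_cycle rot_uniq size_rot rot_cycle.
by split=> // v; rewrite mem_rot.
Qed.

Lemma invmx_signless_laplacian_diag (R : numFieldType) n (e : rel 'I_n) C i P :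
  unicyclic e -> graph_cycle e C -> odd (size C) ->
  path e i P -> uniq (i :: P) -> last i P \in C -> all (predC (mem C)) (belast i P) ->
  invmx (signless_laplacian R e) i i = (size P)%:R + (size C)%:R / 4%:R.
Proof.
move=> [[e_sym e_irr] conn edgesE] gC oddC eP uP cC CbP.
have [cs [gC' memC sizeC]] := graph_cycle_rot_at gC cC.
have CbP' : all (predC (mem (last i P :: cs))) (belast i P).
  by apply: sub_all CbP => v /=; rewrite memC.
have oddC' : odd (size (last i P :: cs)) by rewrite sizeC.
have [f Bf ff] := incidence_delta_preimage R e_sym e_irr eP uP erefl CbP' gC' oddC'.
have /and3P[_ _ cycC] := gC.
have rfB := row_free_incidence R e_sym e_irr conn cycC oddC.
have rfBt : row_free (incidence R e)^T.
  by rewrite /row_free mxrank_tr (eqP rfB) [#|_|]edgesE.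
rewrite signless_laplacianE // (invmx_gram_diag rfB rfBt Bf) ff sizeC.
by rewrite mxE eqxx mulr1n.
Qed.

Theorem mainTheorem13 (R : realFieldType) (n : nat) (e : rel 'I_n)
    (C : seq 'I_n) :
  unicyclic e -> graph_cycle e C -> odd (size C) ->
  forall i : 'I_n,
    i \in C <-> invmx (signless_laplacian R e) i i = (size C)%:R / 4%:R.
Proof.
move=> uni gC oddC i; have [_ conn _] := uni; have /and3P[_ sizeC _] := gC.
have c0C : nth i C 0 \in C by rewrite mem_nth // (leq_trans _ sizeC).
have [P [eP uP cC CbP]] := exists_walk_to_cycle i conn c0C.
rewrite (invmx_signless_laplacian_diag R uni gC oddC eP uP cC CbP).
have -> : (i \in C) = (size P == 0)%N.
  by case: P {eP uP} cC CbP => [-> //|p P _ /= /andP[/negbTE ->]].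
rewrite -[X in _ = X]add0r; split=> [/eqP -> // | /addIr /eqP].
by rewrite pnatr_eq0.
Qed.
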